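(* Let $\mathcal{H}$ be an $n$-dimensional (real or complex) Hilbert space, let $F=\{f_i\}_{i=1}^N$ be a Parseval frame for $\mathcal{H}$, and let $\{q_i\}_{i=1}^N$ be the weight number sequence associated with a probability sequence $\{p_i\}_{i=1}^N$. Then the following are equivalent: (i) the canonical dual of $F$ is a 1-erasure POD of $F$; (ii) the canonical dual of $F$ is a 1-erasure PSOD of $F$; (iii) the canonical dual of $F$ is a 1-erasure PASOD-frame of $F$.
   Context: A finite sequence $F=\{f_i\}_{i=1}^N$ in $\mathcal{H}$ is a Parseval frame if $\sum_{i=1}^N|\langle f,f_i\rangle|^2=\|f\|^2$ for all $f$; its frame operator $S_Ff=\sum_i\langle f,f_i\rangle f_i$ is then the identity and the canonical dual is $S_F^{-1}F=\{S_F^{-1}f_i\}_{i=1}^N$. A frame $G=\{g_i\}_{i=1}^N$ is a dual of $F$ if $f=\sum_i\langle f,f_i\rangle g_i=\sum_i\langle f,g_i\rangle f_i$ for all $f$. A probability sequence is $\{p_i\}_{i=1}^N$ with $0\le p_i\le1$, $\sum p_i=1$; weight numbers $q_i=\frac{\sum_{j} p_j}{\sum_{j} p_j-p_i}\cdot\frac{N-1}{n}$. For $\Lambda\subseteq\{1,\dots,N\}$ the error operator is $E_{\Lambda,(F,G)}f=\sum_{i\in\Lambda}q_i\langle f,f_i\rangle g_i$. Let $\mathcal{O}_P^{(1)}(F,G)=\max_{|\Lambda|=1}\|E_{\Lambda,(F,G)}\|$, $r_P^{(1)}(F,G)=\max_{|\Lambda|=1}\rho(E_{\Lambda,(F,G)})$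 ($\rho$ = spectral radius), $\mathcal{A}_P^{(1)}(F,G)=\max_{|\Lambda|=1}\frac{\|E_{\Lambda,(F,G)}\|+\rho(E_{\Lambda,(F,G)})}{2}$. A dual $G$ of $F$ is a 1-erasure POD (resp. PSOD, PASOD-frame) of $F$ if it minimizes $\mathcal{O}_P^{(1)}(F,\cdot)$ (resp. $r_P^{(1)}(F,\cdot)$, $\mathcal{A}_P^{(1)}(F,\cdot)$) over all duals of $F$. *)

(* Finite-dimensional Hilbert spaces are K^n = 'cV[K]_n with
   K = R (real case) or K = R[i] (complex case), R a real closed field. *)
From HB Require Import structures.
From mathcomp Require Import all_boot all_order all_algebra.
From mathcomp.real_closed Require Import complex.
Set Implicit Arguments. Unset Strict Implicit. Unset Printing Implicit Defensive.
Import Order.TTheory GRing.Theory Num.Theory.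
Local Open Scope ring_scope.

Section FrameDefs.
(* K : scalar field of the Hilbert space, cj : its conjugation (id for real,
   complex conjugation for complex); C : an algebraically closed field
   containing K via iota, used for the spectrum (the spectral radius of an
   operator on a real space is computed from its complex eigenvalues). *)
Variables (K : numFieldType) (cj : K -> K) (C : numClosedFieldType)
          (iota : K -> C).
Variables (n N : nat).

Definition ip (x y : 'cV[K]_n) : K := \sum_(j < n) x j 0 * cj (y j 0).
Definition sqnorm (x : 'cV[K]_n) : K := ip x x.

Definition adj (m k : nat) (A : 'M[K]_(m, k)) : 'M[K]_(k, m) :=
  \matrix_(i, j) cj (A j i).

Definition parseval (F : 'I_N -> 'cV[K]_n) : Prop :=
  forall f : 'cV[K]_n, \sum_(i < N) `|ip f (F i)| ^+ 2 = sqnorm f.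

Definition frame_op (F : 'I_N -> 'cV[K]_n) : 'M[K]_n :=
  \sum_(i < N) (F i *m adj (F i)).

Definition canonical_dual (F : 'I_N -> 'cV[K]_n) : 'I_N -> 'cV[K]_n :=
  fun i => invmx (frame_op F) *m F i.

Definition is_dual (F G : 'I_N -> 'cV[K]_n) : Prop :=
  forall f : 'cV[K]_n,
    f = \sum_(i < N) ip f (F i) *: G i /\ f = \sum_(i < N) ip f (G i) *: F i.

Definition prob_seq (p : 'I_N -> K) : Prop :=
  (forall i, 0 <= p i <= 1) /\ \sum_(i < N) p i = 1.

Definition weight (p : 'I_N -> K) (i : 'I_N) : K :=
  (\sum_(j < N) p j) / (\sum_(j < N) p j - p i) * ((N.-1)%:R / n%:R).

Definition err_op (p : 'I_N -> K) (F G : 'I_N -> 'cV[K]_n)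
  (L : {set 'I_N}) : 'M[K]_n :=
  \sum_(i in L) weight p i *: (G i *m adj (F i)).

Definition is_opnorm (A : 'M[K]_n) (c : K) : Prop :=
  [/\ 0 <= c,
      forall x : 'cV[K]_n, sqnorm (A *m x) <= c ^+ 2 * sqnorm x &
      forall d, 0 <= d ->
        (forall x : 'cV[K]_n, sqnorm (A *m x) <= d ^+ 2 * sqnorm x) -> c <= d].

Definition eigenval (A : 'M[K]_n) (l : C) : Prop :=
  exists2 v : 'cV[C]_n, v != 0 & map_mx iota A *m v = l *: v.

Definition is_specrad (A : 'M[K]_n) (r : C) : Prop :=
  [/\ 0 <= r, (forall l, eigenval A l -> `|l| <= r) &
      (r = 0 \/ exists2 l, eigenval A l & `|l| = r)].

Definition is_max1 (T : numDomainType) (P : {set 'I_N} -> T -> Prop) (v : T)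
  : Prop :=
  (exists L : {set 'I_N}, #|L| = 1%N /\ P L v) /\
  (forall (L : {set 'I_N}) w, #|L| = 1%N -> P L w -> w <= v).

Definition is_O1 (p : 'I_N -> K) (F G : 'I_N -> 'cV[K]_n) (v : K) : Prop :=
  is_max1 (fun L c => is_opnorm (err_op p F G L) c) v.

Definition is_r1 (p : 'I_N -> K) (F G : 'I_N -> 'cV[K]_n) (v : C) : Prop :=
  is_max1 (fun L r => is_specrad (err_op p F G L) r) v.

Definition is_A1 (p : 'I_N -> K) (F G : 'I_N -> 'cV[K]_n) (v : C) : Prop :=
  is_max1 (fun L a => exists c r, [/\ is_opnorm (err_op p F G L) c,
                                     is_specrad (err_op p F G L) r &
                                     a = (iota c + r) / 2]) v.

Definition is_POD1 (p : 'I_N -> K) (F G : 'I_N -> 'cV[K]_n) : Prop :=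
  is_dual F G /\ exists2 v, is_O1 p F G v &
    forall G' v', is_dual F G' -> is_O1 p F G' v' -> v <= v'.

Definition is_PSOD1 (p : 'I_N -> K) (F G : 'I_N -> 'cV[K]_n) : Prop :=
  is_dual F G /\ exists2 v, is_r1 p F G v &
    forall G' v', is_dual F G' -> is_r1 p F G' v' -> v <= v'.

Definition is_PASOD1 (p : 'I_N -> K) (F G : 'I_N -> 'cV[K]_n) : Prop :=
  is_dual F G /\ exists2 v, is_A1 p F G v &
    forall G' v', is_dual F G' -> is_A1 p F G' v' -> v <= v'.

End FrameDefs.

From HB Require Import structures.
From mathcomp Require Import all_boot all_order all_algebra.
From mathcomp.real_closed Require Import complex.
From mathcomp Require Import ring.
From Stdlib Require Import FunctionalExtensionality.
Import Order.TTheory GRing.Theory Num.Theory.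
Set Implicit Arguments. Unset Strict Implicit. Unset Printing Implicit Defensive.
Local Open Scope ring_scope.

(* For a Parseval frame F the canonical dual is F itself.  For Λ = {i} the
   error operator is the rank-one map q_i g_i f_i^*, whose norm is
   q_i ‖g_i‖ ‖f_i‖ and whose spectral radius is q_i |<g_i, f_i>|.  Hence,
   index by index, ρ <= (‖.‖ + ρ)/2 <= ‖.‖ for every dual G, with equality
   throughout at G = F; this gives PSOD => PASOD => POD.  For POD => PSOD: if
   a dual G had q_i |<g_i, f_i>| < max_j q_j ‖f_j‖^2 for every i, then for a
   small t > 0 the dual (1 - t) F + t G would have every q_i ‖(1 - t) f_i +
   t g_i‖ ‖f_i‖ below that maximum, contradicting POD. *)

Lemma exists_small_pos (K : numFieldType) m (D Z : 'I_m -> K) :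
  (forall i, 0 < D i) -> (forall i, 0 <= Z i) ->
  exists2 t : K, 0 < t <= 1 & forall i, t * Z i <= D i.
Proof.
move=> D_gt0 Z_ge0; pose r i := D i / (D i + Z i).
have DZ_gt0 i : 0 < D i + Z i by rewrite ltr_wpDr.
have r_gt0 i : 0 < r i by rewrite divr_gt0.
have r_01 i : 0 <= r i <= 1.
  by rewrite (ltW (r_gt0 i)) /= ler_pdivrMr // mul1r lerDl.
have le_r i : \prod_(k < m) r k <= r i.
  by rewrite (bigD1 i) //=; apply: ler_piMr; [exact: ltW | exact: prodr_ile1].
exists (\prod_(k < m) r k) => [|i].
  by apply/andP; split; [apply: prodr_gt0 | apply: prodr_ile1].
apply: le_trans (ler_wpM2r (Z_ge0 i) (le_r i)) _.
by rewrite /r mulrAC ler_pdivrMr // ler_pM2l // lerDr ltW.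
Qed.

Lemma lerp_sqr_lt (K : numDomainType) (X Y Z V t : K) :
  0 <= X <= V -> Y < V -> 0 <= Z -> 0 < t <= 1 ->
  t * (2 * (V - Y) + Z) <= V - Y ->
  (1 - t) ^+ 2 * X + 2 * (t * (1 - t)) * Y + t ^+ 2 * Z < V.
Proof.
case/andP=> X_ge0 XV YV Z_ge0 /andP[t_gt0 t_le1] small; rewrite -subr_gt0.
have -> : V - ((1 - t) ^+ 2 * X + 2 * (t * (1 - t)) * Y + t ^+ 2 * Z)
    = (1 - t) ^+ 2 * (V - X) + t * (2 * (V - Y) - t * (2 * (V - Y) + Z) + t * V).
  by ring.
apply: ltr_wpDl; first by rewrite mulr_ge0 ?exprn_ge0 ?subr_ge0.
apply: mulr_gt0 => //; apply: ltr_wpDr.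
  exact: mulr_ge0 (ltW t_gt0) (le_trans X_ge0 XV).
rewrite subr_gt0; apply: le_lt_trans small _.
by rewrite mulr_natl mulr2n ltrDl subr_gt0.
Qed.

Definition is_maxval (T : numDomainType) N (h : 'I_N -> T) (v : T) : Prop :=
  (exists j, v = h j) /\ forall i, h i <= v.

Lemma is_maxval_exists (T : numDomainType) N (h : 'I_N -> T) (i0 : 'I_N) :
  (forall i, h i \is Num.real) -> exists v, is_maxval h v.
Proof.
move=> h_real.
have [j _ hj] := @real_arg_maxP _ _ i0 xpredT h isT (fun i _ => h_real i).
by exists (h j); split=> [|i]; [exists j | exact: hj].
Qed.

Lemma is_maxval_mono (T T' : numDomainType) N (f : T -> T') (h : 'I_N -> T) v :
  {mono f : x y / x <= y} -> is_maxval (fun i => f (h i)) (f v) <-> is_maxval h v.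
Proof.
move=> f_mono; have f_inj : injective f.
  by move=> x y fxy; apply/le_anti; rewrite -!f_mono fxy lexx.
split=> [[[j /f_inj ->] ub] | [[j ->] ub]]; split; try by exists j.
  by move=> i; rewrite -f_mono ub.
by move=> i; rewrite f_mono ub.
Qed.

Lemma is_max1_set1 (T : numDomainType) N (P : {set 'I_N} -> T -> Prop)
    (h : 'I_N -> T) :
  (forall i v, P [set i] v <-> v = h i) ->
  forall v, is_max1 P v <-> is_maxval h v.
Proof.
move=> Ph v; split=> [[[L [/eqP/cards1P [j ->] /Ph ->]] ub] | [[j ->] ub]].
  by split=> [|i]; [exists j | apply: ub (cards1 i) _; apply/Ph].
split=> [|L u /eqP/cards1P [i ->] /Ph ->]; last exact: ub.
by exists [set j]; rewrite cards1; split=> //; apply/Ph.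
Qed.

Section Conjugation.
Variables (K : numFieldType) (cj : {rmorphism K -> K}).
Hypothesis mul_conj : forall x, x * cj x = `|x| ^+ 2.

Lemma conj_ge0 x : 0 <= x -> cj x = x.
Proof.
have [-> _|x_neq0 x_ge0] := eqVneq x 0; first exact: rmorph0.
by apply: (mulfI x_neq0); rewrite mul_conj ger0_norm.
Qed.

Lemma conj_eq0 x : (cj x == 0) = (x == 0).
Proof.
apply/eqP/eqP=> [cx0|->]; last exact: rmorph0.
have /eqP : `|x| ^+ 2 = 0 by rewrite -mul_conj cx0 mulr0.
by rewrite expf_eq0 /= normr_eq0 => /eqP.
Qed.

Lemma conjK : involutive cj.
Proof.
move=> x; have [-> | x_neq0] := eqVneq x 0; first by rewrite !rmorph0.
have cx_neq0 : cj x != 0 by rewrite conj_eq0.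
apply: (mulfI cx_neq0).
by rewrite -rmorphM mul_conj (conj_ge0 (exprn_ge0 2 (normr_ge0 x))) -mul_conj mulrC.
Qed.

Lemma addr_conj_le x : x + cj x <= `|x| *+ 2.
Proof.
have [-> | x_neq0] := eqVneq x 0; first by rewrite rmorph0 addr0 normr0 mul0rn.
have nx_gt0 : 0 < `|x| by rewrite normr_gt0.
have key : (`|x| - x) * cj (`|x| - x)
    = `|x| * (`|x| *+ 2 - (x + cj x)) + (x * cj x - `|x| ^+ 2).
  by rewrite rmorphB (conj_ge0 (ltW nx_gt0)); ring.
rewrite !mul_conj subrr addr0 in key.
by rewrite -subr_ge0 -(pmulr_rge0 _ nx_gt0) -key exprn_ge0.
Qed.

Variable n : nat.
Implicit Types f g x y z : 'cV[K]_n.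
Local Notation ip := (ip cj).
Local Notation sqnorm := (sqnorm cj).
Local Notation adj := (adj cj).

Lemma ipDl x y z : ip (x + y) z = ip x z + ip y z.
Proof. by rewrite /ip -big_split; apply: eq_bigr => j _; rewrite mxE mulrDl. Qed.

Lemma ipZl a x z : ip (a *: x) z = a * ip x z.
Proof. by rewrite /ip mulr_sumr; apply: eq_bigr => j _; rewrite mxE mulrA. Qed.

Lemma ipDr x y z : ip x (y + z) = ip x y + ip x z.
Proof.
by rewrite /ip -big_split; apply: eq_bigr => j _; rewrite mxE rmorphD mulrDr.
Qed.

Lemma ipZr a x z : ip x (a *: z) = cj a * ip x z.
Proof.
by rewrite /ip mulr_sumr; apply: eq_bigr => j _; rewrite mxE rmorphM mulrCA.
Qed.

Lemma ipC x y : ip y x = cj (ip x y).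
Proof.
by rewrite /ip rmorph_sum; apply: eq_bigr => j _; rewrite rmorphM conjK mulrC.
Qed.

Lemma ipBl x y z : ip (x - y) z = ip x z - ip y z.
Proof. by rewrite ipDl -scaleN1r ipZl mulN1r. Qed.

Lemma ipBr x y z : ip x (y - z) = ip x y - ip x z.
Proof. by rewrite ipDr -scaleN1r ipZr rmorphN1 mulN1r. Qed.

Lemma ip0l z : ip 0 z = 0.
Proof. by rewrite -(scale0r 0) ipZl mul0r. Qed.

Lemma ip0r x : ip x 0 = 0.
Proof. by rewrite -(scale0r 0) ipZr rmorph0 mul0r. Qed.

Lemma ip_suml m (h : 'I_m -> 'cV[K]_n) z :
  ip (\sum_(i < m) h i) z = \sum_(i < m) ip (h i) z.
Proof. by elim/big_rec2: _ => [|i a b _ <-]; rewrite ?ip0l ?ipDl. Qed.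

Lemma sqnorm_ge0 x : 0 <= sqnorm x.
Proof. by apply: sumr_ge0 => j _; rewrite mul_conj exprn_ge0. Qed.

Lemma sqnorm_eq0 x : (sqnorm x == 0) = (x == 0).
Proof.
apply/idP/eqP=> [|->]; last by rewrite /sqnorm ip0l.
rewrite psumr_eq0 => [/allP x0|j _]; last by rewrite mul_conj exprn_ge0.
apply/matrixP => j k; rewrite ord1 mxE.
have /x0 : j \in index_enum 'I_n by rewrite mem_index_enum.
by rewrite /= mul_conj expf_eq0 /= normr_eq0 => /eqP.
Qed.

Lemma sqnormZ a x : sqnorm (a *: x) = `|a| ^+ 2 * sqnorm x.
Proof. by rewrite /sqnorm ipZl ipZr mulrA mul_conj. Qed.

Lemma sqnormD_orthogonal x y : ip x y = 0 -> sqnorm (x + y) = sqnorm x + sqnorm y.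
Proof.
move=> xy0; rewrite /sqnorm ipDl !ipDr xy0 (ipC x y) xy0 rmorph0.
by rewrite addr0 add0r.
Qed.

Lemma cauchy_schwarz x y : `|ip x y| ^+ 2 <= sqnorm x * sqnorm y.
Proof.
have [-> | y_neq0] := eqVneq y 0.
  by rewrite ip0r normr0 expr0n /= /sqnorm ip0r mulr0.
have sy_gt0 : 0 < sqnorm y by rewrite lt_def sqnorm_eq0 y_neq0 sqnorm_ge0.
pose a := ip x y / sqnorm y.
have uy0 : ip (x - a *: y) (a *: y) = 0.
  by rewrite ipZr ipBl ipZl divfK ?subrr ?mulr0 ?gt_eqF.
have -> : sqnorm x = sqnorm (x - a *: y) + `|a| ^+ 2 * sqnorm y.
  by rewrite -sqnormZ -sqnormD_orthogonal // subrK.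
have -> : ip x y = a * sqnorm y by rewrite divfK ?gt_eqF.
rewrite normrM exprMn (gtr0_norm sy_gt0) mulrDl expr2 mulrA lerDr.
by rewrite mulr_ge0 ?sqnorm_ge0 ?ltW.
Qed.

Lemma adj_mulmx x y : adj y *m x = (ip x y)%:M.
Proof.
apply/matrixP => i j; rewrite !ord1 !mxE mulr1n.
by apply: eq_bigr => k _; rewrite mxE mulrC.
Qed.

Lemma rank1_mulmx f g x : g *m adj f *m x = ip x f *: g.
Proof. by rewrite -mulmxA adj_mulmx mul_mx_scalar. Qed.

Lemma sqnorm_lerp_le t f g : 0 <= t <= 1 ->
  sqnorm ((1 - t) *: f + t *: g)
    <= (1 - t) ^+ 2 * sqnorm f + (1 - t) * t * (`|ip g f| *+ 2) + t ^+ 2 * sqnorm g.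
Proof.
case/andP=> t_ge0 t_le1; have t'_ge0 : 0 <= 1 - t by rewrite subr_ge0.
have e : sqnorm ((1 - t) *: f + t *: g) = (1 - t) ^+ 2 * sqnorm f
    + (1 - t) * t * (ip g f + cj (ip g f)) + t ^+ 2 * sqnorm g.
  rewrite /sqnorm ipDl !ipDr !ipZl !ipZr (conj_ge0 t_ge0) (conj_ge0 t'_ge0).
  by rewrite (ipC g f); ring.
by rewrite e lerD2r lerD2l ler_wpM2l ?mulr_ge0 ?addr_conj_le.
Qed.

Section Frames.
Variables (N : nat) (F : 'I_N -> 'cV[K]_n).

Lemma frame_opE x : frame_op cj F *m x = \sum_(i < N) ip x (F i) *: F i.
Proof.
by rewrite /frame_op mulmx_suml; apply: eq_bigr => i _; rewrite rank1_mulmx.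
Qed.

Lemma parseval_frame_op : parseval cj F -> frame_op cj F = 1%:M.
Proof.
(* T := S - 1 is self-adjoint with <Tx, x> = 0; testing at x + Tx gives
   2 ‖Tx‖^2 = 0. *)
move=> PF; pose S := frame_op cj F.
have ipS x y : ip (S *m x) y = \sum_(i < N) ip x (F i) * ip (F i) y.
  by rewrite frame_opE ip_suml; apply: eq_bigr => i _; rewrite ipZl.
have S_adj x y : ip (S *m x) y = ip x (S *m y).
  rewrite (ipC (S *m y) x) !ipS rmorph_sum; apply: eq_bigr => i _.
  by rewrite rmorphM -!ipC mulrC.
have S_quad x : ip (S *m x) x = sqnorm x.
  by rewrite ipS -PF; apply: eq_bigr => i _; rewrite (ipC x (F i)) mul_conj.
pose T := S - 1%:M.
have T_adj x y : ip (T *m x) y = ip x (T *m y).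
  by rewrite !mulmxBl !mul1mx ipBl ipBr S_adj.
have T_quad x : ip (T *m x) x = 0.
  by rewrite mulmxBl mul1mx ipBl S_quad subrr.
have T_eq0 x : T *m x = 0.
  have := T_quad (x + T *m x).
  rewrite mulmxDr ipDl !ipDr !T_quad add0r addr0 (T_adj (T *m x) x).
  rewrite -mulr2n -mulr_natr => /eqP.
  by rewrite mulf_eq0 pnatr_eq0 orbF sqnorm_eq0 => /eqP.
apply/eqP; rewrite -subr_eq0 -/T; apply/eqP/matrixP => i j.
have := congr1 (fun v : 'cV[K]_n => v i 0) (T_eq0 (delta_mx j 0)).
by rewrite -colE !mxE.
Qed.

Lemma parseval_self_dual : parseval cj F -> is_dual cj F F.
Proof.
move=> /parseval_frame_op S1 f.
by rewrite -frame_opE S1 mul1mx.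
Qed.

Lemma canonical_dual_parseval : parseval cj F -> canonical_dual cj F = F.
Proof.
move=> PF; apply: functional_extensionality => i.
by rewrite /canonical_dual parseval_frame_op // invmx1 mul1mx.
Qed.

End Frames.

Lemma is_dual_lerp N (F G1 G2 : 'I_N -> 'cV[K]_n) t :
  is_dual cj F G1 -> is_dual cj F G2 ->
  is_dual cj F (fun i => (1 - t) *: G1 i + t *: G2 i).
Proof.
move=> dG1 dG2 f; have [f1l f1r] := dG1 f; have [f2l f2r] := dG2 f.
split.
  transitivity ((1 - t) *: \sum_(i < N) ip f (F i) *: G1 i
                + t *: \sum_(i < N) ip f (F i) *: G2 i).
    by rewrite -f1l -f2l -scalerDl subrK scale1r.
  rewrite !scaler_sumr -big_split; apply: eq_bigr => i _.
  by rewrite scalerDr !scalerA mulrC [t * _]mulrC.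
under eq_bigr => i _ do rewrite ipDr !ipZr scalerDl -!scalerA.
rewrite big_split /= -!scaler_sumr -f1r -f2r -scalerDl -rmorphD subrK rmorph1.
by rewrite scale1r.
Qed.

Lemma is_opnorm_unique (A : 'M[K]_n) c d :
  is_opnorm cj A c -> is_opnorm cj A d -> c = d.
Proof.
case=> c_ge0 Ac c_least [d_ge0 Ad d_least].
by apply/le_anti; rewrite c_least ?d_least.
Qed.

Lemma is_opnorm_rank1 f g sf sg : 0 <= sf -> 0 <= sg ->
  sf ^+ 2 = sqnorm f -> sg ^+ 2 = sqnorm g -> is_opnorm cj (g *m adj f) (sg * sf).
Proof.
move=> sf_ge0 sg_ge0 sf2 sg2.
have normE x : sqnorm (g *m adj f *m x) = `|ip x f| ^+ 2 * sg ^+ 2.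
  by rewrite rank1_mulmx sqnormZ sg2.
split=> [|x|d d_ge0 Ad]; first exact: mulr_ge0.
  have -> : (sg * sf) ^+ 2 * sqnorm x = sqnorm x * sqnorm f * sg ^+ 2.
    by rewrite -sf2; ring.
  by rewrite normE ler_wpM2r ?exprn_ge0 ?cauchy_schwarz.
have [-> | sf_neq0] := eqVneq sf 0; first by rewrite mulr0.
have sf2_gt0 : 0 < sf ^+ 2 by rewrite exprn_gt0 // lt_def sf_neq0.
have := Ad f; rewrite normE -[ip f f]/(sqnorm f) -sf2 ger0_norm ?exprn_ge0 //.
have -> : (sf ^+ 2) ^+ 2 * sg ^+ 2 = (sg * sf) ^+ 2 * sf ^+ 2 by ring.
by rewrite ler_pM2r // ler_pXn2r ?nnegrE ?mulr_ge0.
Qed.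

Section Spectrum.
Variables (C : numClosedFieldType) (iota : {rmorphism K -> C}).

Lemma is_specrad_unique (A : 'M[K]_n) r s :
  is_specrad iota A r -> is_specrad iota A s -> r = s.
Proof.
have le_rad r' s' : is_specrad iota A r' -> is_specrad iota A s' -> r' <= s'.
  by case=> r'_ge0 _ [-> | [l Al <-]] [s'_ge0 s'_ub _] //; apply: s'_ub.
by move=> Ar As; apply/le_anti; rewrite !le_rad.
Qed.

Hypothesis iota_norm : forall a, `|iota a| = iota `|a|.

Lemma iota_ge0 a : (0 <= iota a) = (0 <= a).
Proof. by rewrite !ger0_def iota_norm (inj_eq (fmorph_inj iota)). Qed.

Lemma ler_iota : {mono iota : x y / x <= y}.
Proof. by move=> a b; rewrite -subr_ge0 -rmorphB iota_ge0 subr_ge0. Qed.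

Lemma ltr_iota : {mono iota : x y / x < y}.
Proof. exact: leW_mono ler_iota. Qed.

Lemma is_specrad_rank1 f g : is_specrad iota (g *m adj f) (iota `|ip g f|).
Proof.
pose a := map_mx iota (adj f); pose g' := map_mx iota g.
pose s (v : 'cV[C]_n) := (a *m v) 0 0.
have Mv (v : 'cV[C]_n) : map_mx iota (g *m adj f) *m v = s v *: g'.
  by rewrite map_mxM -mulmxA [a *m v]mx11_scalar mul_mx_scalar.
have sZ c (v : 'cV[C]_n) : s (c *: v) = c * s v by rewrite /s -scalemxAr mxE.
have sg' : s g' = iota (ip g f).
  by rewrite /s -map_mxM adj_mulmx map_scalar_mx mxE eqxx mulr1n.
split=> [|l [v v_neq0]|]; first by rewrite iota_ge0.
  rewrite Mv => eig.
  have /(congr1 s) : s v *: g' = l *: v by [].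
  rewrite !sZ sg' mulrC.
  have [sv0 _ | sv_neq0 /(mulIf sv_neq0) <-] := eqVneq (s v) 0.
    move: eig; rewrite sv0 scale0r => /esym/eqP; rewrite scaler_eq0 (negPf v_neq0).
    by rewrite orbF => /eqP ->; rewrite normr0 iota_ge0.
  by rewrite iota_norm.
have [e0 | e_neq0] := eqVneq (ip g f) 0; first by left; rewrite e0 normr0 rmorph0.
right; exists (iota (ip g f)); last by rewrite iota_norm.
exists g'; last by rewrite Mv sg'.
rewrite map_mx_eq0; apply: contra e_neq0 => /eqP ->.
by rewrite ip0l.
Qed.

Section Optimality.
Variables (sqrt : K -> K) (N : nat) (F : 'I_N -> 'cV[K]_n) (p : 'I_N -> K).
Hypotheses (sqrt_ge0 : forall a, 0 <= a -> 0 <= sqrt a)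
           (sqrtK : forall a, 0 <= a -> sqrt a ^+ 2 = a).
Hypotheses (PF : parseval cj F) (Pp : prob_seq p).
Local Notation w := (weight n p).
Local Notation dualF G := (is_dual cj F G).

Lemma weight_ge0 i : 0 <= w i.
Proof.
rewrite /weight; case: Pp => p01 ->; have /andP [_ pi_le1] := p01 i.
by rewrite mulr_ge0 ?divr_ge0 ?ler0n ?subr_ge0.
Qed.

Definition nrm x := sqrt (sqnorm x).

Lemma nrm_ge0 x : 0 <= nrm x.
Proof. exact/sqrt_ge0/sqnorm_ge0. Qed.

Lemma sqr_nrm x : nrm x ^+ 2 = sqnorm x.
Proof. exact/sqrtK/sqnorm_ge0. Qed.

Definition err_norm G i := w i * nrm (G i) * nrm (F i).
Definition err_rad G i := iota (w i * `|ip (G i) (F i)|).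
Definition err_avg G i := (iota (err_norm G i) + err_rad G i) / 2.

Lemma err_op_set1 G i : err_op cj p F G [set i] = (w i *: G i) *m adj (F i).
Proof. by rewrite /err_op big_set1 scalemxAl. Qed.

Lemma is_opnorm_err G i c :
  is_opnorm cj (err_op cj p F G [set i]) c <-> c = err_norm G i.
Proof.
have opn : is_opnorm cj (err_op cj p F G [set i]) (err_norm G i).
  rewrite err_op_set1; apply: is_opnorm_rank1.
  - exact: nrm_ge0.
  - exact: mulr_ge0 (weight_ge0 i) (nrm_ge0 _).
  - exact: sqr_nrm.
  - by rewrite exprMn sqr_nrm sqnormZ ger0_norm ?weight_ge0.
by split=> [/is_opnorm_unique/(_ opn) | ->].
Qed.

Lemma is_specrad_err G i r :
  is_specrad iota (err_op cj p F G [set i]) r <-> r = err_rad G i.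
Proof.
have spr : is_specrad iota (err_op cj p F G [set i]) (err_rad G i).
  have -> : err_rad G i = iota `|ip (w i *: G i) (F i)|.
    by rewrite ipZl normrM ger0_norm ?weight_ge0.
  by rewrite err_op_set1; apply: is_specrad_rank1.
by split=> [/is_specrad_unique/(_ spr) | ->].
Qed.

Lemma is_O1E G v : is_O1 cj p F G v <-> is_maxval (err_norm G) v.
Proof. by apply: is_max1_set1 => i c; apply: is_opnorm_err. Qed.

Lemma is_r1E G v : is_r1 cj iota p F G v <-> is_maxval (err_rad G) v.
Proof. by apply: is_max1_set1 => i r; apply: is_specrad_err. Qed.

Lemma is_A1E G v : is_A1 cj iota p F G v <-> is_maxval (err_avg G) v.
Proof.
apply: is_max1_set1 => i a.
split=> [[c [r [/is_opnorm_err -> /is_specrad_err -> ->]]] // | ->].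
by exists (err_norm G i), (err_rad G i); split; rewrite ?is_opnorm_err ?is_specrad_err.
Qed.

Lemma err_norm_ge0 G i : 0 <= err_norm G i.
Proof. exact: mulr_ge0 (mulr_ge0 (weight_ge0 i) (nrm_ge0 _)) (nrm_ge0 _). Qed.

Lemma err_rad_ge0 G i : 0 <= err_rad G i.
Proof. by rewrite iota_ge0; apply: mulr_ge0 (weight_ge0 i) (normr_ge0 _). Qed.

Lemma err_rad_le_norm G i : err_rad G i <= iota (err_norm G i).
Proof.
rewrite ler_iota /err_norm -mulrA ler_wpM2l ?weight_ge0 //.
rewrite -(ler_pXn2r (_ : (0 < 2)%N)) ?nnegrE ?normr_ge0 //; last first.
  exact: mulr_ge0 (nrm_ge0 _) (nrm_ge0 _).
by rewrite exprMn !sqr_nrm cauchy_schwarz.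
Qed.

Lemma err_rad_le_avg G i : err_rad G i <= err_avg G i.
Proof.
by rewrite ler_pdivlMr ?ltr0n // mulr_natr mulr2n lerD2r err_rad_le_norm.
Qed.

Lemma err_avg_le_norm G i : err_avg G i <= iota (err_norm G i).
Proof.
by rewrite ler_pdivrMr ?ltr0n // mulr_natr mulr2n lerD2l err_rad_le_norm.
Qed.

Definition err_self i := w i * sqnorm (F i).

Lemma err_self_ge0 i : 0 <= err_self i.
Proof. exact: mulr_ge0 (weight_ge0 i) (sqnorm_ge0 _). Qed.

Lemma err_norm_self i : err_norm F i = err_self i.
Proof. by rewrite /err_norm -mulrA -expr2 sqr_nrm. Qed.

Lemma err_rad_self i : err_rad F i = iota (err_self i).
Proof. by rewrite /err_rad ger0_norm ?sqnorm_ge0. Qed.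

Lemma err_avg_self i : err_avg F i = iota (err_self i).
Proof.
rewrite /err_avg err_norm_self err_rad_self -mulr2n -(mulr_natr (iota _) 2).
by rewrite mulfK ?pnatr_eq0.
Qed.

Lemma exists_dual_below G V : (forall i, err_self i <= V) -> dualF G ->
    (forall i, w i * `|ip (G i) (F i)| < V) ->
  exists2 G', dualF G' & forall i, err_norm G' i < V.
Proof.
move=> le_V dG lt_V; pose b i := w i * `|ip (G i) (F i)|.
pose Y i := err_self i * b i; pose Z i := w i ^+ 2 * sqnorm (F i) * sqnorm (G i).
have b_ge0 i : 0 <= b i := mulr_ge0 (weight_ge0 i) (normr_ge0 _).
have V_gt0 i : 0 < V := le_lt_trans (b_ge0 i) (lt_V i).
have Y_lt i : Y i < V ^+ 2.
  rewrite expr2; apply: (@le_lt_trans _ _ (V * b i)).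
    by rewrite /Y; apply: ler_wpM2r.
  by rewrite (ltr_pM2l (V_gt0 i)); apply: lt_V.
have Z_ge0 i : 0 <= Z i.
  exact: mulr_ge0 (mulr_ge0 (exprn_ge0 2 (weight_ge0 i)) (sqnorm_ge0 _)) (sqnorm_ge0 _).
have D_gt0 i : 0 < V ^+ 2 - Y i by rewrite subr_gt0.
have [t t01 small] : exists2 t, 0 < t <= 1 &
    forall i, t * (2 * (V ^+ 2 - Y i) + Z i) <= V ^+ 2 - Y i.
  apply: exists_small_pos => // i.
  exact: addr_ge0 (mulr_ge0 (ler0n _ 2) (ltW (D_gt0 i))) (Z_ge0 i).
have t01' : 0 <= t <= 1 by case/andP: t01 => /ltW ->.
pose G' i := (1 - t) *: F i + t *: G i.
exists G'; first exact: is_dual_lerp (parseval_self_dual PF) dG.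
move=> i; rewrite -(ltr_pXn2r (_ : (0 < 2)%N)) ?nnegrE ?err_norm_ge0 //; last first.
  exact: ltW (V_gt0 i).
apply: (@le_lt_trans _ _
  ((1 - t) ^+ 2 * err_self i ^+ 2 + 2 * (t * (1 - t)) * Y i + t ^+ 2 * Z i)).
  have -> : err_norm G' i ^+ 2 = w i ^+ 2 * sqnorm (F i) * sqnorm (G' i).
    by rewrite /err_norm -!sqr_nrm; ring.
  have w2F_ge0 := mulr_ge0 (exprn_ge0 2 (weight_ge0 i)) (sqnorm_ge0 (F i)).
  apply: le_trans (ler_wpM2l w2F_ge0 (sqnorm_lerp_le (F i) (G i) t01')) _.
  by rewrite /Y /Z /b /err_self le_eqVlt; apply/orP; left; apply/eqP; ring.
apply: lerp_sqr_lt; [|exact: Y_lt|exact: Z_ge0|exact: t01|exact: small].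
rewrite exprn_ge0 ?err_self_ge0 //.
by rewrite ler_pXn2r ?nnegrE ?err_self_ge0 ?(ltW (V_gt0 i)) ?le_V.
Qed.

Definition minimal_max (T : numDomainType) (h : ('I_N -> 'cV[K]_n) -> 'I_N -> T) :=
  exists2 v, is_maxval (h F) v &
    forall G v', dualF G -> is_maxval (h G) v' -> v <= v'.

Lemma minimal_max_le (T : numDomainType) (h1 h2 : ('I_N -> 'cV[K]_n) -> 'I_N -> T) :
  (forall G i, h1 G i \is Num.real) -> h1 F =1 h2 F ->
  (forall G i, dualF G -> h1 G i <= h2 G i) ->
  minimal_max h1 -> minimal_max h2.
Proof.
move=> h1_real eqF le12 [v [[j vE] ub] min1]; exists v.
  by split=> [|i]; rewrite -?eqF ?ub //; exists j; rewrite -eqF.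
move=> G v' dG [_ ub2]; have [u [[k ->] ub1]] := is_maxval_exists j (h1_real G).
apply: le_trans (min1 G _ dG (conj _ ub1)) _; first by exists k.
exact: le_trans (le12 G k dG) (ub2 k).
Qed.

Lemma minimal_max_iota (h : ('I_N -> 'cV[K]_n) -> 'I_N -> K) :
  minimal_max (fun G i => iota (h G i)) -> minimal_max h.
Proof.
move=> [v [[j ->] ub] min]; exists (h F j).
  by apply/(is_maxval_mono _ _ ler_iota); split=> //; exists j.
move=> G v' dG /(is_maxval_mono _ _ ler_iota) maxG.
by rewrite -ler_iota; apply: min maxG.
Qed.

Lemma optimal_dualE (T : numDomainType)
    (P : ('I_N -> 'cV[K]_n) -> T -> Prop) (h : ('I_N -> 'cV[K]_n) -> 'I_N -> T) :
  (forall G v, P G v <-> is_maxval (h G) v) ->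
  (dualF F /\ exists2 v, P F v & forall G v', dualF G -> P G v' -> v <= v')
    <-> minimal_max h.
Proof.
move=> PE; split=> [[_ [v /PE maxF min]] | [v maxF min]].
  by exists v => // G v' dG /PE; apply: min.
split; first exact: parseval_self_dual.
by exists v => [|G v' dG /PE]; [apply/PE | apply: min].
Qed.

Lemma minimal_max_norm_rad : minimal_max err_norm -> minimal_max err_rad.
Proof.
move=> [_ [[j ->] ubF] minF]; rewrite err_norm_self in minF.
have le_j i : err_self i <= err_self j by rewrite -!err_norm_self ubF.
exists (err_rad F j).
  by split=> [|i]; [exists j | rewrite !err_rad_self ler_iota le_j].
move=> G _ dG [[k ->] ubG].
have [//|] := real_leP (ger0_real (err_rad_ge0 F j)) (ger0_real (err_rad_ge0 G k)).
rewrite err_rad_self => lt_k.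
have [G' dG' below] : exists2 G', dualF G' & forall i, err_norm G' i < err_self j.
  apply: exists_dual_below le_j dG _ => i.
  by rewrite -ltr_iota; apply: le_lt_trans (ubG i) lt_k.
have [u maxG'] := is_maxval_exists j (fun i => ger0_real (err_norm_ge0 G' i)).
have [[l ul] _] := maxG'; have := minF G' u dG' maxG'.
by rewrite ul => /(lt_le_trans (below l)); rewrite ltxx.
Qed.

Theorem canonical_dual_optimality :
  let G := canonical_dual cj F in
  (is_POD1 cj p F G <-> is_PSOD1 cj iota p F G) /\
  (is_PSOD1 cj iota p F G <-> is_PASOD1 cj iota p F G).
Proof.
rewrite /= canonical_dual_parseval // /is_POD1 /is_PSOD1 /is_PASOD1.
rewrite (optimal_dualE is_O1E) (optimal_dualE is_r1E) (optimal_dualE is_A1E).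
have rad_avg : minimal_max err_rad -> minimal_max err_avg.
  apply: minimal_max_le => [G i | i | G i _]; last exact: err_rad_le_avg.
    exact/ger0_real/err_rad_ge0.
  by rewrite err_rad_self err_avg_self.
have avg_norm : minimal_max err_avg -> minimal_max err_norm.
  move=> avg_min; apply: minimal_max_iota; move: avg_min.
  apply: minimal_max_le => [G i | i | G i _]; last exact: err_avg_le_norm.
    exact/ger0_real/(le_trans (err_rad_ge0 G i))/err_rad_le_avg.
  by rewrite err_avg_self err_norm_self.
have norm_rad := minimal_max_norm_rad.
tauto.
Qed.

End Optimality.
End Spectrum.
End Conjugation.

Local Open Scope complex_scope.

Lemma normc_real (R : rcfType) (x : R) : `|x%:C| = `|x|%:C.
Proof. by rewrite normc_def /= expr0n addr0 sqrtr_sqr. Qed.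

Theorem corollary3p1 (R : rcfType) (n N : nat) :
  (* real Hilbert space R^n *)
  (forall (F : 'I_N -> 'cV[R]_n) (p : 'I_N -> R),
     parseval id F -> prob_seq p -> (forall i, p i < 1) ->
     let G := canonical_dual id F in
     (is_POD1 id p F G <->
        is_PSOD1 id (fun x : R => x%:C) p F G) /\
     (is_PSOD1 id (fun x : R => x%:C) p F G <->
        is_PASOD1 id (fun x : R => x%:C) p F G)) /\
  (* complex Hilbert space C^n *)
  (forall (F : 'I_N -> 'cV[R[i]]_n) (p : 'I_N -> R[i]),
     parseval (@conjc R) F -> prob_seq p -> (forall i, p i < 1) ->
     let G := canonical_dual (@conjc R) F in
     (is_POD1 (@conjc R) p F G <-> is_PSOD1 (@conjc R) id p F G) /\
     (is_PSOD1 (@conjc R) id p F G <-> is_PASOD1 (@conjc R) id p F G)).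
Proof.
split=> F p PF Pp _.
  apply: (@canonical_dual_optimality _ idfun _ _ _ (real_complex R) _ Num.sqrt) => //.
  - by move=> x; rewrite real_normK ?num_real.
  - exact: normc_real.
  - by move=> x _; apply: sqrtr_ge0.
  - exact: sqr_sqrtr.
apply: (@canonical_dual_optimality _ conjc _ _ _ idfun _ (@sqrtc R)) => //.
- by move=> x; rewrite sqr_normc.
- by move=> x; rewrite sqrtc_ge0.
- by move=> x _; apply: sqr_sqrtc.
Qed.
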